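(* Let $n \geqslant 1$ and let $\lambda$ be an integer partition with $\lambda_1+\ell(\lambda)-1=n$. Let $c=(1,2,\ldots,n+1)\in\mathfrak{S}_{n+1}$ (an $(n+1)$-cycle). Then $\mathcal{RSK}_{\lambda,c}$ coincides with the Hillman–Grassl correspondence $\mathcal{HG}_\lambda$.
   Context: Ferrers diagram $\mathrm{Fer}(\lambda)=\{(i,j)\in(\mathbb{N}^* )^2:j\le\lambda_i\}$. Diagonals: $D_k(\lambda)=\{(i,j)\in\mathrm{Fer}(\lambda):\lambda_1+i-j=k\}$ for $k=1,\dots,n$, $\delta_k=\max\{\min(i,j):(i,j)\in D_k(\lambda)\}$, and $(i,j)\in D_k(\lambda)$ has coordinates $\langle k,\delta\rangle_\lambda$ with $\delta=\delta_k-\min(i,j)+1$. $\square_k(\lambda)$ is the order ideal of $\mathrm{Fer}(\lambda)$ (componentwise order) generated by $D_k(\lambda)$. Row/column labels: label the unit segments of the south-east boundary of $\mathrm{Fer}(\lambda)$ by $1,\dots,n+1$ from top-right to bottom-left; rows and columns inherit the labels of their boundary segments; $\mathbf L$ = row labels, $\mathbf R$ = column labels; $[\ell,r]$ denotes the box with row label $\ell$ and column label $r$ (it exists iff $\ell<r$). Greene–Kleitman invariant: for an acyclic directed graph $G$ and $g:G_0\to\mathbb{N}$, $M_t$ ($t\ge1$) is the maximum over $t$-tuples of (possibly one-vertex) directed paths of the sum of $g$ over the union of their vertex sets, $M_0=0$, $\mathrm{GK}_G(g)=(M_t-M_{t-1})_{t\ge1}$. Hillman–Grassl correspondence (in the form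 used here): let $H_\lambda$ be the directed graph on $\mathrm{Fer}(\lambda)$ with arrows $(i,j)\to(i,j+1)$ and $(i+1,j)\to(i,j)$; for a filling $f$, $\mathcal{HG}_\lambda(f)(\langle k,\delta\rangle_\lambda)$ is the $\delta$-th part of $\mathrm{GK}$ of $f$ restricted to the full subgraph of $H_\lambda$ on $\square_k(\lambda)$. $\mathcal{RSK}_{\lambda,c}$: $\mathrm{AR}(c)$ is the directed graph on transpositions $(i,j)$, $1\le i<j\le n+1$, with arrows $(i,j)\to(i,c(j))$ if $i<c(j)$ and $(i,j)\to(c(i),j)$ if $c(i)<j$; $\mathrm{AR}^{[k]}(c)$ is its full subgraph on $(\ell,r)$ with $\ell\le k<r$. For a filling $f$ of $\lambda$, $\mathrm{rep}_{\lambda,c}(f)(\ell,r)=f([\ell,r])$ if $\ell\in\mathbf L,r\in\mathbf R,\ell<r$ and $0$ otherwise; $\mathcal{RSK}_{\lambda,c}(f)(\langle k,\delta\rangle_\lambda)$ is the $\delta$-th part of $\mathrm{GK}_{\mathrm{AR}^{[k]}(c)}$ of the restriction of $\mathrm{rep}_{\lambda,c}(f)$ to $\mathrm{AR}^{[k]}(c)$. *)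

From mathcomp Require Import all_boot.
From mathcomp Require Import boolp.
Set Implicit Arguments. Unset Strict Implicit. Unset Printing Implicit Defensive.

Section GK.
Variable T : finType.

Definition dpath (A : {set T}) (e : rel T) (p : seq T) : bool :=
  if p is x :: q then path e x q && all (fun v => v \in A) p else false.

Definition union_of_paths (A : {set T}) (e : rel T) (t : nat) (S : {set T}) : Prop :=
  exists ps : seq (seq T),
    [/\ size ps = t, all (dpath A e) ps & S = [set v | has (fun p => v \in p) ps]].

Definition GK_M (A : {set T}) (e : rel T) (g : T -> nat) (t : nat) : nat :=
  \max_(S : {set T} | `[< union_of_paths A e t S >]) \sum_(v in S) g v.

(* the d-th part (d >= 1) of GK_G(g) = (M_t - M_{t-1})_{t>=1} *)
Definition GK_part (A : {set T}) (e : rel T) (g : T -> nat) (d : nat) : nat :=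
  GK_M A e g d - GK_M A e g d.-1.
End GK.

Definition is_partition (lam : seq nat) : bool :=
  sorted geq lam && (0 \notin lam).

(* Ambient finite type: pairs of integers in {0,..,n+1}; it contains all boxes
   of Fer(lam) and all transpositions (i,j), 1 <= i < j <= n+1. *)
Notation cell n := ('I_n.+2 * 'I_n.+2)%type.

(* lam_i, 1-indexed *)
Definition part (lam : seq nat) (i : nat) : nat := nth 0 lam i.-1.

Definition inFer (lam : seq nat) (i j : nat) : bool :=
  (0 < i <= size lam) && (0 < j <= part lam i).

Definition cinFer n (lam : seq nat) (x : cell n) : bool := inFer lam x.1 x.2.

(* k such that (i,j) in D_k: lam_1 + i - j *)
Definition diagk (lam : seq nat) (i j : nat) : nat := head 0 lam + i - j.

Definition inD n (lam : seq nat) (k : nat) (x : cell n) : bool :=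
  cinFer lam x && (diagk lam x.1 x.2 == k).

Definition delta_k n (lam : seq nat) (k : nat) : nat :=
  \max_(x : cell n | inD lam k x) minn x.1 x.2.

(* For (i,j) = <k,delta>_lam: k and delta *)
Definition coord_k n (lam : seq nat) (x : cell n) : nat := diagk lam x.1 x.2.
Definition coord_delta n (lam : seq nat) (x : cell n) : nat :=
  @delta_k n lam (coord_k lam x) - minn x.1 x.2 + 1.

Definition square_k n (lam : seq nat) (k : nat) : {set cell n} :=
  [set y : cell n | cinFer lam y &&
     [exists x : cell n, inD lam k x && (y.1 <= x.1) && (y.2 <= x.2)]].

Definition Hedge n : rel (cell n) := fun x y =>
  ((y.1 == x.1 :> nat) && (y.2 == x.2.+1 :> nat)) ||
  ((y.2 == x.2 :> nat) && (x.1 == y.1.+1 :> nat)).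

(* fillings: f : nat * nat -> nat, only the values on Fer(lam) matter *)
Definition HG n (lam : seq nat) (f : nat * nat -> nat) (x : cell n) : nat :=
  GK_part (@square_k n lam (coord_k lam x)) (@Hedge n)
          (fun y : cell n => f (nat_of_ord y.1, nat_of_ord y.2))
          (@coord_delta n lam x).

(* Unit segments of the south-east boundary of Fer(lam), listed from
   top-right to bottom-left: (true, i) = the vertical segment ending row i,
   (false, j) = the horizontal segment ending column j.  With lam_0 := lam_1
   and lam_{l+1} := 0, the boundary consists, for i = 1, ..., l(lam)+1, of the
   horizontal segments of columns lam_{i-1}, lam_{i-1}-1, ..., lam_i + 1,
   followed (if i <= l(lam)) by the vertical segment of row i. *)
Definition cols_between (a b : nat) : seq (bool * nat) :=
  [seq (false, j) | j <- rev (iota b.+1 (a - b))].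

Definition boundary (lam : seq nat) : seq (bool * nat) :=
  flatten [seq cols_between (part lam i.-1) (part lam i) ++
               (if i <= size lam then [:: (true, i)] else [::])
          | i <- iota 1 (size lam).+1].

(* the segment labelled l (labels 1, ..., n+1) *)
Definition segment (lam : seq nat) (l : nat) : bool * nat :=
  nth (false, 0) (boundary lam) l.-1.

Definition rep (lam : seq nat) (f : nat * nat -> nat) (l r : nat) : nat :=
  if (0 < l < r) && (r <= size (boundary lam)) then
    match segment lam l, segment lam r with
    | (true, i), (false, j) => f (i, j)
    | _, _ => 0
    end
  else 0.

(* c : a permutation of {1,...,n+1}, given as a function on nat *)
Definition ARedge n (c : nat -> nat) : rel (cell n) := fun x y =>
  ((y.1 == x.1 :> nat) && (y.2 == c x.2 :> nat) && (x.1 < c x.2)) ||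
  ((y.2 == x.2 :> nat) && (y.1 == c x.1 :> nat) && (c x.1 < x.2)).

(* vertices of AR^[k](c): transpositions (l,r), 1 <= l <= k < r <= n+1 *)
Definition ARk n (k : nat) : {set cell n} :=
  [set x : cell n | (0 < x.1 <= k) && (k < x.2 <= n.+1)].

Definition RSK n (lam : seq nat) (c : nat -> nat) (f : nat * nat -> nat)
    (x : cell n) : nat :=
  GK_part (@ARk n (coord_k lam x)) (@ARedge n c)
          (fun y : cell n => rep lam f y.1 y.2)
          (@coord_delta n lam x).

Definition cyc (n : nat) (m : nat) : nat := if m <= n then m.+1 else 1.

From mathcomp Require Import all_boot.
From mathcomp Require Import boolp.
From mathcomp Require Import zify.
Set Implicit Arguments. Unset Strict Implicit. Unset Printing Implicit Defensive.

(* Label the box (i, j) of Fer(lam) by the transposition (l_i, r_j) formed by the labels of its row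
   and its column.  This is a bijection from Fer(lam) onto the pairs at which rep_{lam,c}(f) may be
   nonzero, and rep_{lam,c}(f) takes the value f(i, j) at the label of (i, j).  A box lies in
   square_k(lam) exactly when l_i <= k < r_j, i.e. when its label lies in AR^[k](c).  Arrows of H_lam
   go north or east, while for the cycle c the arrows of AR^[k](c) are the unit steps south and
   east, and the labelling reverses these two orders.  In both regions any two comparable vertices
   are joined by a path inside the region, so a set of vertices of positive weight lies on one path
   iff it is a chain.  Hence the labelling matches the unions of t paths on the two sides, and the
   Greene-Kleitman invariants agree for every k. *)

Section GreeneKleitman.
Variable T : finType.

Definition within (A : {set T}) (e : rel T) : rel T := [rel u v | e u v && (v \in A)].

Lemma dpath_within (A : {set T}) (e : rel T) x q :
  dpath A e (x :: q) = (x \in A) && path (within A e) x q.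
Proof.
have -> : path (within A e) x q = path e x q && all (mem A) q.
  by elim: q x => [|y q IH] x //=; rewrite IH -!andbA; do !bool_congr.
by rewrite /= andbCA.
Qed.

Lemma connect_within_cons (A : {set T}) (e : rel T) u v w :
  e u v -> v \in A -> connect (within A e) v w -> connect (within A e) u w.
Proof. by move=> uv vA; apply: connect_trans (connect1 _); rewrite /within /= uv vA. Qed.

Lemma connect_path_refine (r : rel T) x s :
  path (connect r) x s -> exists2 q, path r x q & {subset s <= x :: q}.
Proof.
elim: s x => [|y s IH] x /=; first by exists [::].
case/andP=> /connectP[p xp ->] /IH[q yq sq].
exists (p ++ q); first by rewrite cat_path xp.
have yp : last x p \in x :: p ++ q by rewrite -cat_cons mem_cat mem_last.
move=> v; rewrite inE => /orP[/eqP-> //|/sq].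
rewrite inE => /orP[/eqP-> //|vq].
by rewrite -cat_cons mem_cat vq orbT.
Qed.

Definition support (A : {set T}) (g : T -> nat) := [pred v in A | g v != 0].

Lemma mem_dpath (A : {set T}) (e : rel T) p v : dpath A e p -> v \in p -> v \in A.
Proof. by case: p => // x q /andP[_ /allP]; apply. Qed.

Lemma leq_sum_inj (S S' : {set T}) (g g' : T -> nat) (phi : T -> T) :
  {in support S g &, injective phi} ->
  {in support S g, forall v, phi v \in S' /\ g' (phi v) = g v} ->
  \sum_(v in S) g v <= \sum_(v in S') g' v.
Proof.
move=> phi_inj phiS; set X := [set v in support S g].
have -> : \sum_(v in S) g v = \sum_(v in X) g' (phi v).
  rewrite (bigID (fun v => g v == 0)) /= big1 ?add0n => [|v /andP[_ /eqP//]].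
  apply: eq_big => [v|v vS]; first by rewrite inE.
  by have [] := phiS v vS.
rewrite -big_imset; last by move=> u v; rewrite !inE; apply: phi_inj.
have sub : phi @: X \subset S'.
  by apply/subsetP => w /imsetP[v]; rewrite inE => /phiS[? _] ->.
by rewrite [leqRHS](big_setID (phi @: X)) /= (setIidPr sub) leq_addr.
Qed.

Section Transfer.
Variables (A A' : {set T}) (e e' O : rel T) (g : T -> nat) (phi : T -> T).

Hypothesis O_trans : transitive O.
Hypothesis e_sub_O : {in A &, subrel e O}.
Hypothesis phi_support : {in support A g, forall v, phi v \in A'}.
Hypothesis phi_reverse : {in support A g &, forall u v, O u v -> connect (within A' e') (phi v) (phi u)}.
Variable a' : T.
Hypothesis a'_in : a' \in A'.

(* The support of a path is an O-chain, which phi turns into a chain for reachability in A';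
   a single path of A' threads such a chain. *)
Lemma dpath_transfer p : dpath A e p ->
  exists2 p', dpath A' e' p' & {in support A g, forall v, v \in p -> phi v \in p'}.
Proof.
case: p => [|x q] // /andP[xq Aq].
set s := [seq v <- x :: q | v \in support A g].
have s_sorted : sorted O s.
  by apply/sorted_filter/(sub_in_path e_sub_O Aq).
have s_support : all (support A g) s by apply/allP => v; rewrite mem_filter => /andP[].
have : sorted (connect (within A' e')) (rev (map phi s)).
  rewrite rev_sorted sorted_map.
  exact: (sub_in_sorted (P := support A g) phi_reverse s_support s_sorted).
have phi_s v : v \in support A g -> v \in x :: q -> phi v \in rev (map phi s).
  by move=> vS vq; rewrite mem_rev map_f // mem_filter vS.
case E: (rev (map phi s)) phi_s => [|y t] phi_s.
  by exists [:: a']; rewrite /dpath /= ?a'_in // => v /phi_s/[apply].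
case/connect_path_refine => q' yq' tq'.
have yA' : y \in A'.
  have /mapP[v + ->] : y \in map phi s by rewrite -mem_rev E mem_head.
  by rewrite mem_filter => /andP[/phi_support].
exists (y :: q'); first by rewrite dpath_within yA'.
move=> v vS /(phi_s v vS); rewrite inE => /predU1P[->|/tq' //].
exact: mem_head.
Qed.
End Transfer.

Lemma GK_M_le (A A' : {set T}) (e e' : rel T) (g g' : T -> nat) (phi : T -> T) t :
  {in support A g &, injective phi} ->
  {in support A g, forall v, g' (phi v) = g v} ->
  (forall p, dpath A e p ->
     exists2 p', dpath A' e' p' & {in support A g, forall v, v \in p -> phi v \in p'}) ->
  GK_M A e g t <= GK_M A' e' g' t.
Proof.
move=> phi_inj phi_weight transfer.
apply/bigmax_leqP => _ /asboolP[ps [<- ps_paths ->]].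
have [ps' [size_ps' ps'_paths cover]] : exists ps', [/\ size ps' = size ps,
    all (dpath A' e') ps' & {in support A g, forall v,
      has (fun p => v \in p) ps -> has (fun p' => phi v \in p') ps'}].
  elim: ps ps_paths => [|p ps IH] /=; first by exists [::].
  case/andP=> /transfer[p' p'_path p'_cover] /IH[ps' [<- ps'_paths cover]].
  exists (p' :: ps'); split => //=; first by rewrite p'_path.
  by move=> v vS /orP[/(p'_cover v vS)->|/(cover v vS)->]; rewrite ?orbT.
set S := [set v | has (fun p => v \in p) ps].
have SA : {subset support S g <= support A g}.
  move=> v /andP[]; rewrite inE /= => /hasP[p pps vp] gv.
  by rewrite /support inE (mem_dpath (allP ps_paths p pps) vp).
apply: leq_trans (leq_bigmax_cond [set v | has (fun p' => v \in p') ps'] _).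
  apply: leq_sum_inj => [u v /SA uA /SA vA|v vS]; first exact: phi_inj.
  split; last exact/phi_weight/SA.
  by rewrite inE; apply: cover (SA v vS) _; case/andP: vS; rewrite inE.
by apply/asboolP; exists ps'; rewrite size_ps'.
Qed.

Section AntiIsomorphism.
Variables (A A' : {set T}) (e e' O O' : rel T) (g g' : T -> nat) (phi psi : T -> T).
Hypotheses (O_trans : transitive O) (O'_trans : transitive O').
Hypotheses (e_sub_O : {in A &, subrel e O}) (e'_sub_O' : {in A' &, subrel e' O'}).
Hypothesis O_connect : {in A &, subrel O (connect (within A e))}.
Hypothesis O'_connect : {in A' &, subrel O' (connect (within A' e'))}.
Hypothesis phi_support : {in support A g, forall v, phi v \in support A' g'}.
Hypothesis psi_support : {in support A' g', forall w, psi w \in support A g}.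
Hypothesis phiK : {in support A g, cancel phi psi}.
Hypothesis psiK : {in support A' g', cancel psi phi}.
Hypothesis phi_weight : {in support A g, forall v, g' (phi v) = g v}.
Hypothesis phi_anti : {in support A g &, forall u v, O' (phi v) (phi u) = O u v}.
Variables (a a' : T).
Hypotheses (a_in : a \in A) (a'_in : a' \in A').

Lemma GK_M_anti_iso t : GK_M A e g t = GK_M A' e' g' t.
Proof.
have inA' w : w \in support A' g' -> w \in A' by case/andP.
have inA v : v \in support A g -> v \in A by case/andP.
apply/eqP; rewrite eqn_leq; apply/andP; split.
- apply: GK_M_le (can_in_inj phiK) phi_weight _ => p.
  apply: (dpath_transfer O_trans e_sub_O _ _ a'_in) => [v /phi_support/inA' //|u v uS vS Ouv].
  by apply: O'_connect; rewrite ?phi_anti //; exact/inA'/phi_support.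
- apply: GK_M_le (can_in_inj psiK) _ _ => [w wS|p].
    by rewrite -{2}(psiK wS) phi_weight ?psi_support.
  apply: (dpath_transfer O'_trans e'_sub_O' _ _ a_in) => [w /psi_support/inA //|u w uS wS Ouw].
  apply: O_connect; try exact/inA/psi_support.
  by rewrite -phi_anti ?psi_support // !psiK.
Qed.
End AntiIsomorphism.
End GreeneKleitman.
(* [bd i p s]: the boundary segments from row i downwards, when row i-1 has length p and rows
   i, i+1, ... have lengths s. *)
Fixpoint bd (i p : nat) (s : seq nat) : seq (bool * nat) :=
  match s with
  | [::] => cols_between p 0
  | x :: s' => cols_between p x ++ (true, i) :: bd i.+1 x s'
  end.

Lemma size_cols_between a b : size (cols_between a b) = a - b.
Proof. by rewrite size_map size_rev size_iota. Qed.

Lemma nth_cols_between a b m d : m < a - b -> nth d (cols_between a b) m = (false, a - m).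
Proof.
move=> mlt; rewrite (nth_map 0) ?size_rev ?size_iota // nth_rev ?size_iota //.
rewrite nth_iota; last by lia.
congr (_, _); lia.
Qed.

Lemma boundary_bd lam : boundary lam = bd 1 (head 0 lam) lam.
Proof.
suff gen d m : size lam = m + d ->
  flatten [seq cols_between (part lam i.-1) (part lam i) ++
               (if i <= size lam then [:: (true, i)] else [::])
          | i <- iota m.+1 d.+1] = bd m.+1 (part lam m) (drop m lam).
  by rewrite /boundary (gen (size lam) 0) // drop0 /part /= nth0.
elim: d m => [|d IH] m sz.
  rewrite addn0 in sz; rewrite /= cats0 drop_oversize ?sz // ltnn cats0.
  by rewrite [part lam m.+1]/part nth_default //= sz.
rewrite (drop_nth 0); last by lia.
rewrite -[iota _ _]cat1s map_cat flatten_cat (IH m.+1); last by lia.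
by rewrite /= cats0 ifT -?catA //; lia.
Qed.

Lemma path_geq_all p s : path geq p s -> all (geq p) s.
Proof. by apply: order_path_min => a b c /= ba cb; apply: leq_trans cb ba. Qed.

Lemma count_geq_path p s j : path geq p s -> p < j -> count (fun y => j <= y) s = 0.
Proof.
move=> /path_geq_all /allP ps pj; apply/eqP; rewrite -leqn0 leqNgt -has_count.
by apply/hasP => -[y /ps /= yp jy]; lia.
Qed.

Lemma size_bd i p s : path geq p s -> size (bd i p s) = p + size s.
Proof.
elim: s i p => [|x s IH] i p /=; first by rewrite size_cols_between subn0 addn0.
by case/andP=> xp ps; rewrite size_cat size_cols_between /= IH //; lia.
Qed.

Lemma nth_bd_row i p s a d : path geq p s -> a < size s ->
  nth d (bd i p s) (p - nth 0 s a + a) = (true, i + a).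
Proof.
elim: s i p a => [|x s IH] i p a //= /andP[xp ps] aS.
rewrite nth_cat size_cols_between.
case: a aS => [|a] aS /=; first by rewrite addn0 ltnn subnn addn0.
have al : nth 0 s a <= x by move/allP: (path_geq_all ps); apply; rewrite mem_nth.
rewrite ifN; last by lia.
have -> : p - nth 0 s a + a.+1 - (p - x) = (x - nth 0 s a + a).+1 by lia.
by rewrite /= IH // addSnnS.
Qed.

Lemma nth_bd_col i p s j d : path geq p s -> 0 < j <= p ->
  nth d (bd i p s) (p - j + count (fun y => j <= y) s) = (false, j).
Proof.
elim: s i p => [|x s IH] i p /= => [_ jp|/andP[xp ps] jp].
  by rewrite addn0 nth_cols_between; [congr (_, _); lia | lia].
rewrite nth_cat size_cols_between.
case: (leqP j x) => jx.
  rewrite ifN; last by lia.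
  have -> : p - j + (true + count (fun y => j <= y) s) - (p - x)
            = (x - j + count (fun y => j <= y) s).+1 by lia.
  by rewrite /= IH //; case/andP: jp => ->.
rewrite (count_geq_path ps jx) /= addn0 ifT; last by lia.
by rewrite nth_cols_between; [congr (_, _); lia | lia].
Qed.

Lemma bd_inv p s m : path geq p s -> m < p + size s ->
  (exists2 a, a < size s & m = p - nth 0 s a + a) \/
  (exists2 j, 0 < j <= p & m = p - j + count (fun y => j <= y) s).
Proof.
elim: s p m => [|x s IH] p m /=.
  by move=> _ mp; right; exists (p - m); lia.
case/andP=> xp ps mlt.
case: (ltngtP m (p - x)) => mx.
- right; exists (p - m); first by lia.
  by rewrite (count_geq_path ps (_ : x < p - m)) /=; lia.
- have [[a aS ma]|[j jp mj]] := IH x (m - (p - x)).-1 ps ltac:(lia).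
    have al : nth 0 s a <= x by move/allP: (path_geq_all ps); apply; rewrite mem_nth.
    by left; exists a.+1 => //=; lia.
  by right; exists j; [lia | rewrite /= (_ : j <= x); lia].
- by left; exists 0 => //=; lia.
Qed.

Definition conj_part (lam : seq nat) (j : nat) : nat := count (fun y => j <= y) lam.
(* The vertical segment ending row i is preceded by lam_1 - lam_i horizontal and i - 1 vertical
   segments, the horizontal segment ending column j by lam_1 - j horizontal and lam'_j vertical ones. *)
Definition row_label (lam : seq nat) (i : nat) : nat := head 0 lam - part lam i + i.
Definition col_label (lam : seq nat) (j : nat) : nat := head 0 lam - j + conj_part lam j + 1.

Lemma conj_part_antimono lam : {homo conj_part lam : j j' /~ j <= j'}.
Proof. by move=> j' j jj'; apply: sub_count => y /= /(leq_trans jj'). Qed.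

Lemma ltn_count_sorted s i j : sorted geq s ->
  (i < count (fun y => j <= y) s) = (i < size s) && (j <= nth 0 s i).
Proof.
elim: s i => [|x s IH] i //= xs.
have ps : sorted geq s := path_sorted xs.
case: (leqP j x) => jx.
  by rewrite add1n; case: i => [|i] //=; rewrite ltnS IH.
rewrite (count_geq_path xs jx) add0n; case: i => [|i] /=; first by apply/esym/negbTE; rewrite -ltnNge.
rewrite ltn0 ltnS; case: (ltnP i (size s)) => //= iS.
have : nth 0 s i <= x by move/allP: (path_geq_all xs); apply; rewrite mem_nth.
by lia.
Qed.

Section Labels.
Variable lam : seq nat.
Hypothesis lam_sorted : sorted geq lam.

Lemma path_head : path geq (head 0 lam) lam.
Proof. by case: lam lam_sorted => //= x s ->; rewrite leqnn. Qed.

Lemma part_le_head i : part lam i <= head 0 lam.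
Proof.
rewrite /part; case: (ltnP i.-1 (size lam)) => iS; last by rewrite nth_default.
by move/allP: (path_geq_all path_head); apply; rewrite mem_nth.
Qed.

Lemma part_antimono : {homo part lam : i i' /~ i <= i'}.
Proof.
move=> i' i ii'; rewrite /part.
case: (ltnP i'.-1 (size lam)) => i'S; last by rewrite [nth _ _ i'.-1]nth_default.
have geq_trans : transitive geq by move=> a b c /= ba cb; apply: leq_trans cb ba.
by apply: (sorted_leq_nth geq_trans leqnn 0 lam_sorted); rewrite ?inE /=; lia.
Qed.

Lemma leq_conj_part i j : 0 < i -> (i <= conj_part lam j) = (i <= size lam) && (j <= part lam i).
Proof. by case: i => // i _; rewrite /conj_part ltn_count_sorted. Qed.

Lemma conj_part_le_size j : conj_part lam j <= size lam.
Proof. exact: count_size. Qed.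

Lemma size_boundary : size (boundary lam) = head 0 lam + size lam.
Proof. by rewrite boundary_bd size_bd // path_head. Qed.

Lemma segment_row_label i : 0 < i <= size lam -> segment lam (row_label lam i) = (true, i).
Proof.
move=> iS; rewrite /segment /row_label boundary_bd.
have -> : (head 0 lam - part lam i + i).-1 = head 0 lam - nth 0 lam i.-1 + i.-1.
  by have := part_le_head i; rewrite /part; lia.
rewrite nth_bd_row ?path_head //; last by lia.
by congr (_, _); lia.
Qed.

Lemma segment_col_label j : 0 < j <= head 0 lam -> segment lam (col_label lam j) = (false, j).
Proof. by move=> jp; rewrite /segment /col_label boundary_bd addn1 /= nth_bd_col ?path_head. Qed.

Lemma segment_cases m : 0 < m <= size (boundary lam) ->
  (exists2 i, 0 < i <= size lam & m = row_label lam i) \/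
  (exists2 j, 0 < j <= head 0 lam & m = col_label lam j).
Proof.
rewrite size_boundary => mS.
have [[a aS ma]|[j jp mj]] := bd_inv (m := m.-1) path_head ltac:(lia).
  left; exists a.+1; first by lia.
  by have := part_le_head a.+1; rewrite /row_label /part /=; lia.
by right; exists j => //; rewrite /col_label /conj_part; lia.
Qed.

Lemma segment_rowP m i : 0 < m <= size (boundary lam) -> segment lam m = (true, i) ->
  0 < i <= size lam /\ m = row_label lam i.
Proof.
move/segment_cases => [[i' iS ->]|[j jp ->]]; last by rewrite segment_col_label.
by rewrite segment_row_label // => -[<-].
Qed.

Lemma segment_colP m j : 0 < m <= size (boundary lam) -> segment lam m = (false, j) ->
  0 < j <= head 0 lam /\ m = col_label lam j.
Proof.
move/segment_cases => [[i iS ->]|[j' jp ->]]; first by rewrite segment_row_label.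
by rewrite segment_col_label // => -[<-].
Qed.

Lemma leq_row_label i i' : (row_label lam i <= row_label lam i') = (i <= i').
Proof.
have := part_le_head i; have := part_le_head i'; rewrite /row_label => hi' hi.
case: (leqP i i') => [ii'|i'i]; first by have := part_antimono ii'; lia.
by apply/negbTE; rewrite -ltnNge; have := part_antimono (ltnW i'i); lia.
Qed.

Lemma leq_col_label j j' : j' <= head 0 lam ->
  (col_label lam j <= col_label lam j') = (j' <= j).
Proof.
rewrite /col_label => j'h.
case: (leqP j' j) => [j'j|jj']; first by have := conj_part_antimono lam j'j; lia.
by apply/negbTE; rewrite -ltnNge; have := conj_part_antimono lam (ltnW jj'); lia.
Qed.

Lemma ltn_row_col_label i j : 0 < i -> 0 < j <= head 0 lam ->
  (row_label lam i < col_label lam j) = (j <= part lam i).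
Proof.
move=> i0 /andP[j0 jh]; have := part_le_head i; have := conj_part_le_size j.
have := leq_conj_part j i0; rewrite /row_label /col_label.
case: (leqP i (size lam)) => iS /= cnt_i *; last first.
  by rewrite /part nth_default; [apply/idP/idP; lia | lia].
by apply/idP/idP => ?; lia.
Qed.
End Labels.

Definition northeast n : rel (cell n) := fun u v => (v.1 <= u.1) && (u.2 <= v.2).
Definition southeast n : rel (cell n) := fun u v => (u.1 <= v.1) && (u.2 <= v.2).

Section Cells.
Variable n : nat.

Lemma cell_inj (u w : cell n) : u.1 = w.1 :> nat -> u.2 = w.2 :> nat -> u = w.
Proof. by case: u w => [a b] [c d] /= /val_inj-> /val_inj->. Qed.

Lemma northeast_trans : transitive (@northeast n).
Proof. by move=> v u w /andP[? ?] /andP[? ?]; apply/andP; split; lia. Qed.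

Lemma southeast_trans : transitive (@southeast n).
Proof. by move=> v u w /andP[? ?] /andP[? ?]; apply/andP; split; lia. Qed.

Lemma Hedge_northeast : subrel (@Hedge n) (@northeast n).
Proof. by move=> u v; rewrite /northeast => /orP[] /andP[/eqP-> /eqP->]; rewrite leqnn ?leqnSn. Qed.

Lemma ARedge_cyc k (u v : cell n) : u \in @ARk n k -> v \in @ARk n k ->
  @ARedge n (cyc n) u v =
  ((v.1 == u.1 :> nat) && (v.2 == u.2.+1 :> nat)) || ((v.2 == u.2 :> nat) && (v.1 == u.1.+1 :> nat)).
Proof.
rewrite !inE /ARedge /cyc => /andP[/andP[u1 u1k] /andP[ku2 u2n]] /andP[/andP[v1 v1k] /andP[kv2 v2n]].
by case: (leqP u.2 n) => u2; case: (leqP u.1 n) => u1n; apply/idP/idP; lia.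
Qed.

Lemma ARedge_southeast k : {in @ARk n k &, subrel (@ARedge n (cyc n)) (@southeast n)}.
Proof.
move=> u v uA vA; rewrite (ARedge_cyc uA vA) /southeast.
by case/orP=> /andP[/eqP-> /eqP->]; rewrite leqnn ?leqnSn.
Qed.

Lemma connect_ARk k (u w : cell n) : u \in @ARk n k -> w \in @ARk n k ->
  u.1 <= w.1 -> u.2 <= w.2 -> connect (within (@ARk n k) (@ARedge n (cyc n))) u w.
Proof.
move=> uA wA; have [d] := ubnP (w.1 - u.1 + (w.2 - u.2)).
elim: d u uA => // d IH u uA du uw1 uw2.
case: (eqVneq u w) => [->|uw]; first exact: connect0.
move: (uA) (wA); rewrite !inE => /andP[/andP[u1 u1k] /andP[ku2 u2n]] /andP[/andP[w1 w1k] /andP[kw2 w2n]].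
case: (ltnP u.2 w.2) => uw2'.
  have v2 : (inord u.2.+1 : 'I_n.+2) = u.2.+1 :> nat by rewrite inordK //; lia.
  have vA : (u.1, inord u.2.+1) \in @ARk n k by rewrite inE /= v2; lia.
  apply: (connect_within_cons _ vA); first by rewrite (ARedge_cyc uA vA) /= v2 !eqxx.
  by apply: IH; rewrite /= ?v2 //; lia.
have uw1' : u.1 < w.1.
  rewrite ltn_neqAle uw1 andbT; apply/eqP => e1.
  by move/eqP: uw; apply; apply: cell_inj; lia.
have v1 : (inord u.1.+1 : 'I_n.+2) = u.1.+1 :> nat by rewrite inordK //; lia.
have vA : (inord u.1.+1, u.2) \in @ARk n k by rewrite inE /= v1; lia.
apply: (connect_within_cons _ vA); first by rewrite (ARedge_cyc uA vA) /= v1 !eqxx orbT.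
by apply: IH; rewrite /= ?v1 //; lia.
Qed.
End Cells.

Section Correspondence.
Variables (n : nat) (lam : seq nat).
Hypothesis lam_sorted : sorted geq lam.
Hypothesis lam_n : head 0 lam + size lam = n.+1.

Local Notation square k := (@square_k n lam k).

Lemma inFer_ideal i j i' j' : inFer lam i j -> 0 < i' <= i -> 0 < j' <= j -> inFer lam i' j'.
Proof.
case/andP=> /andP[i0 iS] /andP[j0 ji] /andP[i'0 i'i] /andP[j'0 j'j].
by have := part_antimono lam_sorted i'i; rewrite /inFer i'0 j'0 /=; lia.
Qed.

Lemma square_k_ideal k (y z : cell n) : y \in square k ->
  0 < z.1 <= y.1 -> 0 < z.2 <= y.2 -> z \in square k.
Proof.
rewrite !inE => /andP[yF /existsP[x /andP[/andP[xD yx1] yx2]]] z1 z2.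
rewrite /cinFer (inFer_ideal yF z1 z2); apply/existsP; exists x; rewrite xD /=; lia.
Qed.

Lemma connect_square_k k (u w : cell n) : u \in square k -> w \in square k ->
  w.1 <= u.1 -> u.2 <= w.2 -> connect (within (square k) (@Hedge n)) u w.
Proof.
move=> uA wA; have [d] := ubnP (u.1 - w.1 + (w.2 - u.2)).
elim: d u uA => // d IH u uA du wu1 uw2.
case: (eqVneq u w) => [->|uw]; first exact: connect0.
have [/andP[/andP[u1 _] /andP[u2 _]] /andP[/andP[w1 _] /andP[w2 _]]] :
  cinFer lam u /\ cinFer lam w by move: uA wA; rewrite !inE => /andP[-> _] /andP[-> _].
case: (ltnP w.1 u.1) => wu1'.
  have v1 : (inord u.1.-1 : 'I_n.+2) = u.1.-1 :> nat.
    by rewrite inordK //; have := ltn_ord u.1; lia.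
  have vA : (inord u.1.-1, u.2) \in square k by apply: (square_k_ideal uA); rewrite /= ?v1; lia.
  apply: (connect_within_cons _ vA); first by rewrite /Hedge /= v1 prednK // !eqxx orbT.
  by apply: IH; rewrite /= ?v1 //; lia.
have uw2' : u.2 < w.2.
  rewrite ltn_neqAle uw2 andbT; apply/eqP => e2.
  by move/eqP: uw; apply; apply: cell_inj; lia.
have v2 : (inord u.2.+1 : 'I_n.+2) = u.2.+1 :> nat.
  by rewrite inordK //; have := ltn_ord w.2; lia.
have vA : (u.1, inord u.2.+1) \in square k by apply: (square_k_ideal wA); rewrite /= ?v2; lia.
apply: (connect_within_cons _ vA); first by rewrite /Hedge /= v2 !eqxx.
by apply: IH; rewrite /= ?v2 //; lia.
Qed.

Lemma mem_square_k k (y : cell n) : cinFer lam y ->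
  (y \in square k) = (row_label lam y.1 <= k < col_label lam y.2).
Proof.
move=> yF; have /andP[/andP[y1 y1S] /andP[y2 y2p]] := yF.
have := part_le_head lam_sorted y.1; have := conj_part_le_size lam y.2.
rewrite /row_label /col_label => cy py; apply/idP/idP.
  rewrite inE => /andP[_ /existsP[[a b]]].
  rewrite /inD /cinFer /inFer /diagk /= => /andP[/andP[/andP[/and3P[/andP[a0 aS] b0 bp] /eqP abk] ya] yb].
  have : a <= conj_part lam b by rewrite (leq_conj_part lam_sorted) // aS bp.
  have := part_antimono lam_sorted ya; have := conj_part_antimono lam yb.
  by have := part_le_head lam_sorted a; lia.
case/andP=> rk kc.
have witness (x : cell n) : inD lam k x -> y.1 <= x.1 -> y.2 <= x.2 -> y \in square k.
  by move=> xD yx1 yx2; rewrite inE yF; apply/existsP; exists x; rewrite xD yx1 yx2.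
case: (leqP (k + y.2 - head 0 lam) y.1) => yk.
  have x2 : (inord (head 0 lam + y.1 - k) : 'I_n.+2) = head 0 lam + y.1 - k :> nat.
    by rewrite inordK //; lia.
  apply: (witness (y.1, inord (head 0 lam + y.1 - k))); rewrite /= ?x2 //; last by lia.
  by rewrite /inD /cinFer /inFer /diagk /= x2 y1 y1S /=; lia.
have : k + y.2 - head 0 lam <= conj_part lam y.2 by lia.
rewrite (leq_conj_part lam_sorted); last by lia.
case/andP=> x1S x2p.
have x1 : (inord (k + y.2 - head 0 lam) : 'I_n.+2) = k + y.2 - head 0 lam :> nat.
  by rewrite inordK //; lia.
apply: (witness (inord (k + y.2 - head 0 lam), y.2)); rewrite /= ?x1 //; last by lia.
by rewrite /inD /cinFer /inFer /diagk /= x1 x1S x2p y2 /= !andbT; lia.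
Qed.

Lemma square_k_Fer k (y : cell n) : y \in square k -> cinFer lam y.
Proof. by rewrite inE => /andP[]. Qed.

Lemma mem_square_coord_k (x : cell n) : cinFer lam x -> x \in square (coord_k lam x).
Proof.
move=> xF; rewrite inE xF; apply/existsP; exists x.
by rewrite /inD xF eqxx !leqnn.
Qed.

Definition label_cell (y : cell n) : cell n :=
  (inord (row_label lam y.1), inord (col_label lam y.2)).

Lemma label_cell_val (y : cell n) : cinFer lam y ->
  (label_cell y).1 = row_label lam y.1 :> nat /\ (label_cell y).2 = col_label lam y.2 :> nat.
Proof.
case/andP=> /andP[y1 y1S] /andP[y2 y2p].
have := part_le_head lam_sorted y.1; have := conj_part_le_size lam y.2 => cy py.
by split; rewrite inordK // /row_label /col_label; lia.
Qed.

Lemma label_cell_reverse (u v : cell n) : cinFer lam u -> cinFer lam v ->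
  southeast (label_cell v) (label_cell u) = northeast u v.
Proof.
move=> uF vF; have [u1 u2] := label_cell_val uF; have [v1 v2] := label_cell_val vF.
have /andP[_ /andP[_ up]] := uF; have uh := leq_trans up (part_le_head lam_sorted u.1).
by rewrite /southeast u1 u2 v1 v2 (leq_row_label lam_sorted) (leq_col_label lam_sorted).
Qed.

Lemma label_cell_inj : {in cinFer lam &, injective label_cell}.
Proof.
move=> y z yF zF yz; have := label_cell_reverse yF zF; have := label_cell_reverse zF yF.
rewrite yz /southeast !leqnn /northeast => /esym/andP[zy1 yz2] /esym/andP[yz1 zy2].
by apply: cell_inj; apply/eqP; rewrite eqn_leq ?yz1 ?yz2 ?zy1 ?zy2.
Qed.

Definition unlabel_cell (w : cell n) : cell n :=
  odflt w [pick y | cinFer lam y && (label_cell y == w)].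

Lemma label_cellK : {in cinFer lam, cancel label_cell unlabel_cell}.
Proof.
move=> y yF; rewrite /unlabel_cell; case: pickP => [z /andP[zF /eqP]|/(_ y)].
  exact: label_cell_inj.
by rewrite eqxx andbT (yF : cinFer lam y).
Qed.

Lemma mem_ARk_label_cell k (y : cell n) : cinFer lam y ->
  (label_cell y \in @ARk n k) = (y \in square k).
Proof.
move=> yF; have [y1 y2] := label_cell_val yF; rewrite (mem_square_k _ yF) inE y1 y2.
have /andP[/andP[y10 _] /andP[y20 yp]] := yF; have cy := conj_part_le_size lam y.2.
have ph := part_le_head lam_sorted y.1.
by rewrite /row_label /col_label; apply/idP/idP; lia.
Qed.

Variable f : nat * nat -> nat.

Lemma rep_label_cell (y : cell n) : cinFer lam y ->
  rep lam f (label_cell y).1 (label_cell y).2 = f (y.1 : nat, y.2 : nat).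
Proof.
move=> yF; have [-> ->] := label_cell_val yF.
have /andP[/andP[y1 y1S] /andP[y2 y2p]] := yF; have yh := part_le_head lam_sorted y.1.
have lt_labels : row_label lam y.1 < col_label lam y.2.
  by rewrite (ltn_row_col_label lam_sorted y1) ?y2p // y2 (leq_trans y2p yh).
rewrite /rep size_boundary // lt_labels andbT ifT; last first.
  by have := conj_part_le_size lam y.2; rewrite /row_label /col_label; lia.
by rewrite segment_row_label ?y1 // segment_col_label // y2 (leq_trans y2p).
Qed.

Lemma rep_neq0 (w : cell n) : rep lam f w.1 w.2 != 0 -> exists2 y, cinFer lam y & label_cell y = w.
Proof.
rewrite /rep; case: ifP => [/andP[/andP[w1 w12] w2B] | _]; last by rewrite eqxx.
case E1: (segment lam w.1) => [[] i]; case E2: (segment lam w.2) => [[] j]; rewrite ?eqxx // => _.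
have [/andP[i0 iS] e1] := segment_rowP lam_sorted (m := w.1) ltac:(lia) E1.
have [/andP[j0 jh] e2] := segment_colP lam_sorted (m := w.2) ltac:(lia) E2.
have ji : j <= part lam i by rewrite -ltn_row_col_label ?j0 // -e1 -e2.
have [y1 y2] : (inord i : 'I_n.+2) = i :> nat /\ (inord j : 'I_n.+2) = j :> nat by split; rewrite inordK //; lia.
have yF : cinFer lam ((inord i, inord j) : cell n) by rewrite /cinFer y1 y2 /inFer i0 iS j0 ji.
exists (inord i, inord j) => //; have [l1 l2] := label_cell_val yF.
by apply: cell_inj; rewrite ?l1 ?l2 ?y1 ?y2 -?e1 -?e2.
Qed.

Local Notation fill_weight := (fun y : cell n => f (y.1 : nat, y.2 : nat)).
Local Notation rep_weight := (fun y : cell n => rep lam f y.1 y.2).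

Lemma rep_support k (w : cell n) : w \in support (@ARk n k) rep_weight ->
  exists2 y, y \in support (square k) fill_weight & label_cell y = w.
Proof.
case/andP=> wA wS; have [y yF yw] := rep_neq0 wS; exists y => //.
by rewrite inE -(mem_ARk_label_cell _ yF) -(rep_label_cell yF) yw wA.
Qed.

Lemma GK_M_square_ARk k t (x : cell n) : x \in square k ->
  GK_M (square k) (@Hedge n) fill_weight t = GK_M (@ARk n k) (@ARedge n (cyc n)) rep_weight t.
Proof.
move=> xA; have xF := square_k_Fer xA.
have supportF y : y \in support (square k) fill_weight -> y \in cinFer lam.
  by case/andP=> /square_k_Fer.
apply: (@GK_M_anti_iso _ _ _ _ _ (@northeast n) (@southeast n) _ _ label_cell unlabel_cell).
- exact: northeast_trans.
- exact: southeast_trans.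
- by move=> u v _ _; apply: Hedge_northeast.
- exact: ARedge_southeast.
- by move=> u v uA vA /andP[]; apply: connect_square_k.
- by move=> u v uA vA /andP[]; apply: connect_ARk.
- move=> y /andP[yA fy]; have yF := square_k_Fer yA.
  by rewrite inE rep_label_cell // mem_ARk_label_cell // yA.
- by move=> w /rep_support[y yS <-]; rewrite label_cellK //; apply: supportF.
- by move=> y /supportF; apply: label_cellK.
- by move=> w /rep_support[y /supportF yF <-]; rewrite label_cellK.
- by move=> y /supportF /rep_label_cell.
- by move=> u v /supportF uF /supportF vF; apply: label_cell_reverse.
- exact: xA.
- by rewrite -(mem_ARk_label_cell _ xF) in xA; exact: xA.
Qed.
End Correspondence.

Theorem proposition6p5 (n : nat) (lam : seq nat) :
  1 <= n -> is_partition lam -> head 0 lam + size lam - 1 = n ->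
  forall (f : nat * nat -> nat) (x : cell n),
    cinFer lam x -> @RSK n lam (cyc n) f x = @HG n lam f x.
Proof.
move=> _ /andP[lam_sorted _] lam_n f x xF.
have {}lam_n : head 0 lam + size lam = n.+1.
  have /andP[/andP[x1 x1S] /andP[x2 x2p]] := xF.
  by have := part_le_head lam_sorted x.1; lia.
have xA := mem_square_coord_k xF.
by rewrite /RSK /HG /GK_part !(GK_M_square_ARk lam_sorted lam_n f _ xA).
Qed.
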